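(* Let $(\mathbf k((G)),l)$ be a series field with prelogarithmic section, with associated EL-series field $(\mathbf k((G))^{EL},\mathrm{Log},\mathrm{Exp})$. Let $U\subseteq H\subseteq G$ be subgroups such that $U$ is a proper convex subgroup of $H$ ($U=\{1\}$ allowed). Suppose $(\dagger)$: $\mathrm{Log}(h)<|f|$ for all $h\in H$ and all $f\in\mathbf k((H^{>U}))$ with $f\ne0$. Let $H^{\#,U}=H\cdot\mathrm{Exp}(\mathbf k((H^{>U})))\subseteq G^\#$. Then $H$ is a proper convex subgroup of $H^{\#,U}$, $H^{\#,U}$ is the anti-lexicographic product of $H$ and $\mathrm{Exp}(\mathbf k((H^{>U})))$, and $\mathrm{Log}(h')<|f|$ for all $h'\in H^{\#,U}$ and all nonzero $f\in\mathbf k(((H^{\#,U})^{>H}))$.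
   Context: Let $\mathbf k$ be an ordered field and $(G,\cdot,<)$ a totally ordered abelian group (written multiplicatively). $\mathbf k((G))$ denotes the field of generalized power series $\alpha=\sum_{g\in G}\alpha(g)\,g$ ($\alpha(g)\in\mathbf k$) with anti-well-ordered support, usual operations, canonical valuation $v(\alpha)=\max\operatorname{supp}\alpha$ and ordering $\alpha>0$ iff $\alpha(v(\alpha))>0$; $\mathbf k$, $G$ are identified with subsets of $\mathbf k((G))$. For $S\subseteq G$, $\mathbf k((S))=\{\alpha:\operatorname{supp}\alpha\subseteq S\}$. For a subgroup $H$ and $A\subseteq G$, $H^{>A}=\{h\in H:h>a\ \forall a\in A\}$, $H^{>1}=\{h\in H:h>1\}$. Every $\alpha>0$ is uniquely $\alpha=g\,a(1+\varepsilon)$ with $g=v(\alpha)$, $a\in\mathbf k^{>0}$, $\varepsilon\in\mathbf k((G^{<1}))$. A prelogarithmic section is an order-preserving group embedding $l:(G,\cdot)\to(\mathbf k((G^{>1})),+)$. Fix an order-preserving group isomorphism $\log:(\mathbf k^{>0},\cdot)\to(\mathbf k,+)$. The prelogarithm of $l$ is $L(g\,a(1+\varepsilon))=l(g)+\log a+\sum_{i\ge1}(-1)^{i-1}\varepsilon^i/i$. Exponential extension: $G^\#$ is the ordered abelian group of formal symbols $e(\alpha)$, $\alpha\in\mathbf k((G^{>1}))$, with $e(\alpha)e(\beta)=e(\alpha+\beta)$, $e(\alpha)<e(\beta)\iff\alpha<\beta$, and $e(l(g))$ identified with $g\in G$; $l^\#(e(\alpha))=\alpha$ is a prelogarithmic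 section of $\mathbf k((G^\#))$ extending $l$. Iterating: $G^{\#n}$, $l^{\#n}$, prelogarithms $L^{\#n}$. The EL-series field is $\mathbf k((G))^{EL}=\bigcup_n\mathbf k((G^{\#n}))$ with $\mathrm{Log}=\bigcup_nL^{\#n}$, an order preserving isomorphism from the positive elements onto $(\mathbf k((G))^{EL},+)$; $\mathrm{Exp}=\mathrm{Log}^{-1}$. Note $\mathrm{Log}(g)=l(g)$ for $g\in G$, and $\mathrm{Exp}(f)\in G^\#$ for $f\in\mathbf k((G^{>1}))$. ''Anti-lexicographic product'' of subgroups $A,B$ of an ordered group: the group is $A\cdot B$, the product is direct, and $A$ is convex in it. *)

From HB Require Import structures.
From mathcomp Require Import all_boot all_order all_algebra.
From Stdlib Require Import Classical ClassicalEpsilon.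
Set Implicit Arguments. Unset Strict Implicit. Unset Printing Implicit Defensive.
Import Order.TTheory GRing.Theory Num.Theory.
Local Open Scope ring_scope.

Record oagroup := OAGroup {
  oa_car :> Type;
  oa_mul : oa_car -> oa_car -> oa_car;
  oa_one : oa_car;
  oa_inv : oa_car -> oa_car;
  oa_lt  : oa_car -> oa_car -> Prop;
  oa_mulA : forall x y z, oa_mul x (oa_mul y z) = oa_mul (oa_mul x y) z;
  oa_mulC : forall x y, oa_mul x y = oa_mul y x;
  oa_mul1 : forall x, oa_mul oa_one x = x;
  oa_mulV : forall x, oa_mul (oa_inv x) x = oa_one;
  oa_lt_irr : forall x, ~ oa_lt x x;
  oa_lt_trans : forall x y z, oa_lt x y -> oa_lt y z -> oa_lt x z;
  oa_lt_total : forall x y, oa_lt x y \/ x = y \/ oa_lt y x;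
  oa_lt_mul : forall x y z, oa_lt x y -> oa_lt (oa_mul x z) (oa_mul y z)
}.

Definition is_subgroup (G : oagroup) (H : G -> Prop) : Prop :=
  H (oa_one G) /\ forall x y, H x -> H y -> H (oa_mul x (oa_inv y)).

Definition le_of {T : Type} (lt : T -> T -> Prop) (x y : T) : Prop :=
  lt x y \/ x = y.

Definition convex_in {T : Type} (lt : T -> T -> Prop) (A B : T -> Prop) : Prop :=
  forall a1 a2 x, A a1 -> A a2 -> B x -> le_of lt a1 x -> le_of lt x a2 -> A x.

Definition above {T : Type} (lt : T -> T -> Prop) (B A : T -> Prop) (x : T) : Prop :=
  B x /\ forall a, A a -> lt a x.

Definition anti_wo {T : Type} (lt : T -> T -> Prop) (S : T -> Prop) : Prop :=
  forall A : T -> Prop, (forall x, A x -> S x) -> (exists x, A x) ->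
    exists m, A m /\ forall x, A x -> ~ lt m x.

(* Generalized power series k((T)): functions T -> k with
   anti-well-ordered support. *)
Section Series.
Variables (k : realFieldType) (T : Type) (lt : T -> T -> Prop).

Definition supp (a : T -> k) (x : T) : Prop := a x != 0.

Definition is_series (a : T -> k) : Prop := anti_wo lt (supp a).

Definition series_on (S : T -> Prop) (a : T -> k) : Prop :=
  is_series a /\ forall x, supp a x -> S x.

Definition szero : T -> k := fun _ => 0.
Definition sadd (a b : T -> k) : T -> k := fun x => a x + b x.
Definition sopp (a : T -> k) : T -> k := fun x => - a x.

Definition spos (a : T -> k) : Prop :=
  exists g, 0 < a g /\ forall g', lt g g' -> a g' = 0.

Definition slt (a b : T -> k) : Prop := spos (fun x => b x - a x).

Definition sabs (a : T -> k) : T -> k :=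
  if excluded_middle_informative (spos a) then a else sopp a.
End Series.
Arguments szero {k T}.

Section Exten.
Variables (k : realFieldType) (G : oagroup).

Definition Ggt1 (g : G) : Prop := oa_lt (oa_one G) g.

Definition prelog_section (l : G -> (G -> k)) : Prop :=
  (forall g, series_on (@oa_lt G) Ggt1 (l g)) /\
  (forall g h, l (oa_mul g h) = sadd (l g) (l h)) /\
  (forall g h, oa_lt g h -> slt (@oa_lt G) (l g) (l h)).

(* Carrier of G^#: the symbol e(alpha) is represented by alpha : G -> k
   (only alpha in k((G^{>1})) are elements of G^#, see [Gsharp]).
   Product in G^# is addition of exponents, the order is that of exponents,
   the unit is e(0), and g in G is identified with e(l g). *)
Definition Gsharp_car : Type := G -> k.
Definition Gsharp (a : Gsharp_car) : Prop := series_on (@oa_lt G) Ggt1 a.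
Definition Gsharp_lt : Gsharp_car -> Gsharp_car -> Prop := slt (@oa_lt G).

(* The embedding k((G)) -> k((G^#)) induced by g |-> e(l g) :
   sum_g a(g) g |-> sum_g a(g) e(l g). *)
Definition embed (l : G -> (G -> k)) (a : G -> k) : Gsharp_car -> k :=
  fun b => match excluded_middle_informative (exists g, l g = b) with
           | left H => a (proj1_sig (constructive_indefinite_description _ H))
           | right _ => 0
           end.

(* Log on G^# is l^#(e(alpha)) = alpha, viewed in k((G^#)) *)
Definition LogSharp (l : G -> (G -> k)) (a : Gsharp_car) : Gsharp_car -> k :=
  embed l a.
End Exten.

(* Write E = k((H^{>U})), so that Exp(E) is represented inside G^# by the
   exponents themselves and H^{#,U} = { l h + a : h in H, a in E }.
   The proof rests on two consequences of (†) = "l h < |f| for h in H and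
   nonzero f in E":
   - sign domination: l h + f has the sign of f for every nonzero f in E;
     this gives at once that H meets Exp(E) trivially and that H is convex
     in H^{#,U};
   - support bound: for u in H^{>U} (which exists since U is a proper convex
     subgroup of H) every exponent in the support of l h lies below u.
   From the support bound, Log(l h + a) = sum over g in supp(l h + a) of
   coefficients times the monomials e(l g), and each e(l g) lies in the image
   of H in G^#, hence below every element of (H^{#,U})^{>H}.  So the leading
   monomial of any nonzero f in k(((H^{#,U})^{>H})) strictly dominates the
   whole support of Log(h'), which is the new condition (†). *)
From mathcomp Require Import all_boot all_order all_algebra.
From Stdlib Require Import Classical ClassicalEpsilon FunctionalExtensionality.
From mathcomp Require Import ring lra.
Import Order.TTheory GRing.Theory Num.Theory.
Local Open Scope ring_scope.
Set Implicit Arguments. Unset Strict Implicit.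

Section SeriesOrder.
Variables (k : realFieldType) (T : Type) (lt : T -> T -> Prop).

Definition leading (f : T -> k) (b : T) : Prop :=
  f b != 0 /\ forall x, lt b x -> f x = 0.

Lemma leading_exists (f : T -> k) :
  is_series lt f -> f <> szero -> exists b, leading f b.
Proof.
move=> fs fnz.
have [x fx] : exists x, f x != 0.
  apply: NNPP => none; apply: fnz; apply: functional_extensionality => x.
  by apply/eqP; apply: contra_notT none => fx; exists x.
have [m [fm mmax]] := fs (supp f) (fun _ h => h) (ex_intro _ x fx).
exists m; split=> // y my; have [//|fy] := eqVneq (f y) 0.
by case: (mmax y fy my).
Qed.

Lemma sabs_leading (f : T -> k) : is_series lt f -> f <> szero ->
  exists b, [/\ f b != 0, 0 < sabs lt f b & forall x, lt b x -> sabs lt f x = 0].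
Proof.
move=> fs fnz; rewrite /sabs; case: excluded_middle_informative => fpos.
  by case: fpos => b [fb bmax]; exists b; rewrite gt_eqF.
have [b [fb bmax]] := leading_exists fs fnz.
exists b; split=> [//||x /bmax fx]; last by rewrite /sopp /= fx oppr0.
rewrite /sopp /= oppr_gt0 lt_neqAle fb /= leNgt.
by apply: contra_notN fpos => fb_gt0; exists b.
Qed.

Lemma spos_ext (a b : T -> k) : (forall x, a x = b x) -> spos lt a -> spos lt b.
Proof. by move=> eab [g [ag gmax]]; exists g; rewrite -eab; split=> // x /gmax; rewrite -eab. Qed.

Lemma not_spos0 (a : T -> k) : (forall x, a x = 0) -> ~ spos lt a.
Proof. by move=> a0 [g [ag _]]; rewrite a0 ltxx in ag. Qed.

Lemma sabs_pos (f : T -> k) : spos lt f -> sabs lt f = f.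
Proof. by rewrite /sabs; case: excluded_middle_informative. Qed.

Lemma sabs_neg (f : T -> k) : ~ spos lt f -> sabs lt f = sopp f.
Proof. by rewrite /sabs; case: excluded_middle_informative. Qed.

Lemma series0 (S : T -> Prop) : series_on lt S (@szero k T).
Proof.
split=> [A Asupp [x Ax]|x]; last by rewrite /supp /szero eqxx.
by move: (Asupp x Ax); rewrite /supp /szero eqxx.
Qed.

Lemma spos_dominated (a d : T -> k) b : 0 < a b -> (forall x, lt b x -> a x = 0) ->
  (forall x, le_of lt b x -> d x = 0) -> spos lt (fun x => a x - d x).
Proof.
move=> ab bmax dvan; exists b; split; first by rewrite dvan ?subr0 //; right.
by move=> x bx; rewrite bmax // dvan ?subr0 //; left.
Qed.

Definition monomial (c : k) (u : T) : T -> k :=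
  fun x => if excluded_middle_informative (x = u) then c else 0.

Lemma monomial_at c u : monomial c u u = c.
Proof. by rewrite /monomial; case: excluded_middle_informative. Qed.

Lemma monomial_off c u x : x <> u -> monomial c u x = 0.
Proof. by rewrite /monomial; case: excluded_middle_informative. Qed.

Lemma monomial_neq0 c u : c != 0 -> monomial c u <> szero.
Proof. by move=> c0 /(f_equal (fun f => f u)); rewrite monomial_at; apply/eqP. Qed.

Section StrictOrder.
Hypothesis lt_irr : forall x, ~ lt x x.
Hypothesis lt_trans : forall x y z, lt x y -> lt y z -> lt x z.
Hypothesis lt_total : forall x y, lt x y \/ x = y \/ lt y x.

Lemma nlt_le x y : ~ lt x y -> le_of lt y x.
Proof. by move=> nxy; case: (lt_total x y) => [//|[->|yx]]; [right|left]. Qed.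

Lemma le_lt_trans_of x y z : le_of lt x y -> lt y z -> lt x z.
Proof. by case=> [xy /(lt_trans xy)|->]. Qed.

Lemma le_trans_of x y z : le_of lt x y -> le_of lt y z -> le_of lt x z.
Proof. by move=> xy [/(le_lt_trans_of xy) xz|<-]; [left|]. Qed.

Lemma monomial_series (S : T -> Prop) c u : S u -> series_on lt S (monomial c u).
Proof.
have supp_u x : supp (monomial c u) x -> x = u.
  by rewrite /supp; case: (classic (x = u)) => // xu; rewrite monomial_off ?eqxx.
split=> [A Asupp [x Ax]|x /supp_u -> //].
exists x; split=> // y Ay.
by rewrite (supp_u _ (Asupp _ Ax)) (supp_u _ (Asupp _ Ay)); apply: lt_irr.
Qed.

Lemma monomial_spos c u : 0 < c -> spos lt (monomial c u).
Proof.
move=> c0; exists u; rewrite monomial_at; split=> // x ux.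
by apply: monomial_off => xu; apply: (lt_irr (x := u)); rewrite -{2}xu.
Qed.

Lemma spos_leading (f : T -> k) b : leading f b -> spos lt f <-> 0 < f b.
Proof.
move=> [fb bmax]; split=> [[g [fg gmax]]|fb0]; last by exists b.
case: (lt_total b g) => [/bmax f0|[-> //|/gmax f0]].
- by rewrite f0 ltxx in fg.
- by rewrite f0 eqxx in fb.
Qed.

Lemma spos_opp (a b : T -> k) : (forall x, b x = - a x) -> spos lt a -> ~ spos lt b.
Proof.
move=> ba [g [ag gmax]]; rewrite (spos_leading (b := g)).
  by rewrite ba oppr_gt0 ltNge (ltW ag).
by split=> [|x /gmax ax]; rewrite ba ?oppr_eq0 ?gt_eqF // ax oppr0.
Qed.

Lemma spos_add (a b : T -> k) : spos lt a -> spos lt b -> spos lt (fun x => a x + b x).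
Proof.
move=> [g1 [a1 max1]] [g2 [b2 max2]].
case: (lt_total g1 g2) => [g12|[eg|g21]].
- exists g2; split; first by rewrite (max1 _ g12) add0r.
  by move=> x g2x; rewrite (max2 _ g2x) (max1 x) ?addr0 //; apply: lt_trans g12 g2x.
- subst g2; exists g1; split; first exact: addr_gt0.
  by move=> x g1x; rewrite max1 // max2 // addr0.
- exists g1; split; first by rewrite (max2 _ g21) addr0.
  by move=> x g1x; rewrite (max1 _ g1x) (max2 x) ?addr0 //; apply: lt_trans g21 g1x.
Qed.

Lemma slt_irr (a : T -> k) : ~ slt lt a a.
Proof. by apply: not_spos0 => x; rewrite subrr. Qed.

Lemma slt_trans (a b c : T -> k) : slt lt a b -> slt lt b c -> slt lt a c.
Proof. by move=> ab bc; apply: spos_ext (spos_add bc ab) => x; rewrite addrA subrK. Qed.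

Lemma slt_asym (a b : T -> k) : slt lt a b -> slt lt b a -> False.
Proof. by move=> ab; apply: spos_opp ab => x; rewrite opprB. Qed.
End StrictOrder.
End SeriesOrder.

Section OrderedGroup.
Variable G : oagroup.
Local Notation ltG := (@oa_lt G).

Lemma oa_mul1r (x : G) : oa_mul x (oa_one G) = x.
Proof. by rewrite oa_mulC oa_mul1. Qed.

Lemma oa_mulrV (x : G) : oa_mul x (oa_inv x) = oa_one G.
Proof. by rewrite oa_mulC oa_mulV. Qed.

Lemma subgroup_inv (H : G -> Prop) x : is_subgroup H -> H x -> H (oa_inv x).
Proof. by move=> [H1 Hdiv] Hx; have := Hdiv _ _ H1 Hx; rewrite oa_mul1. Qed.

Lemma oa_lt_inv (a h : G) : ltG h (oa_inv a) -> ltG a (oa_inv h).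
Proof.
move=> /(oa_lt_mul (oa_mul a (oa_inv h))).
have -> : oa_mul h (oa_mul a (oa_inv h)) = a.
  by rewrite oa_mulA (oa_mulC h a) -oa_mulA oa_mulrV oa_mul1r.
by rewrite oa_mulA oa_mulV oa_mul1.
Qed.

Lemma above_exists (U H : G -> Prop) : is_subgroup U -> is_subgroup H ->
  (exists2 h, H h & ~ U h) -> convex_in ltG U H -> exists u, above ltG H U u.
Proof.
move=> sU sH [h Hh Uh] Uconv.
have [h_above|] := classic (forall a, U a -> ltG a h); first by exists h.
move=> /not_all_ex_not [a1 not_a1h]; have [Ua1 a1h] := imply_to_and _ _ not_a1h.
have [h_below|] := classic (forall a, U a -> ltG h a).
  exists (oa_inv h); split=> [|a Ua]; first exact: subgroup_inv.
  by apply: oa_lt_inv; apply: h_below; apply: subgroup_inv.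
move=> /not_all_ex_not [a2 not_ha2]; have [Ua2 ha2] := imply_to_and _ _ not_ha2.
have ltG_total := @oa_lt_total G.
by case: Uh; apply: (Uconv a2 a1) => //; apply: nlt_le.
Qed.
End OrderedGroup.

Section Prelog.
Variables (k : realFieldType) (G : oagroup) (l : G -> G -> k).
Hypothesis hl : prelog_section l.

Lemma l_one x : l (oa_one G) x = 0.
Proof.
have := f_equal (fun f => f x) (proj1 (proj2 hl) (oa_one G) (oa_one G)).
by rewrite oa_mul1 /sadd => /eqP; rewrite -subr_eq subrr eq_sym => /eqP.
Qed.

Lemma l_inv g x : l (oa_inv g) x = - l g x.
Proof.
have := f_equal (fun f => f x) (proj1 (proj2 hl) (oa_inv g) g).
by rewrite oa_mulV /sadd l_one => /eqP; rewrite eq_sym addr_eq0 => /eqP.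
Qed.

Lemma l_mul_inv g h x : l (oa_mul g (oa_inv h)) x = l g x - l h x.
Proof. by rewrite (proj1 (proj2 hl)) /sadd l_inv. Qed.
End Prelog.

Section ExponentialStep.
Variables (k : realFieldType) (G : oagroup) (l : G -> G -> k).
Hypothesis hl : prelog_section l.
Variables (U H : G -> Prop).
Hypothesis hH : is_subgroup H.
Local Notation ltG := (@oa_lt G).
Local Notation ltS := (@Gsharp_lt k G).

Hypothesis hdagger : forall h, H h -> forall f : G -> k,
  series_on ltG (above ltG H U) f -> f <> szero -> slt ltG (l h) (sabs ltG f).

Definition Hsharp (b : G -> k) : Prop := exists2 h, H h & b = l h.
Definition ExpPart (b : G -> k) : Prop := series_on ltG (above ltG H U) b.
Definition HsharpU (b : G -> k) : Prop :=
  exists h, exists a, [/\ H h, ExpPart a & b = sadd (l h) a].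

Let H_inv x : H x -> H (oa_inv x). Proof. exact: subgroup_inv. Qed.
Let ltG_irr := @oa_lt_irr G.
Let ltG_trans := @oa_lt_trans G.
Let ltG_total := @oa_lt_total G.

Lemma dagger_sign h f : H h -> ExpPart f -> f <> szero ->
  (spos ltG f -> spos ltG (sadd (l h) f)) /\
  (~ spos ltG f -> spos ltG (sopp (sadd (l h) f))).
Proof.
move=> Hh Ef fnz; split=> [fpos|fneg].
- have := hdagger (H_inv Hh) Ef fnz; rewrite /slt sabs_pos //.
  by apply: spos_ext => x; rewrite l_inv // opprK addrC.
- have := hdagger Hh Ef fnz; rewrite /slt sabs_neg //.
  by apply: spos_ext => x; rewrite /sopp /sadd opprD addrC.
Qed.

(* H and Exp(E) meet trivially: l h in E would satisfy l h < |l h| or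
   l h^-1 = -l h < |l h| = -l h by (†) *)
Lemma Hsharp_ExpPart_trivial b : Hsharp b -> ExpPart b -> b = szero.
Proof.
move=> [h Hh ->] Eh; apply: NNPP => lhnz.
have [abs_lh|abs_lh] : sabs ltG (l h) = l h \/ sabs ltG (l h) = l (oa_inv h).
- have [lhpos|lhneg] := classic (spos ltG (l h)); [left|right].
    exact: sabs_pos.
  by rewrite sabs_neg //; apply: functional_extensionality => x; rewrite l_inv.
- by apply: (slt_irr (lt := ltG) (a := l h)); rewrite -{2}abs_lh; apply: hdagger.
- apply: (slt_irr (lt := ltG) (a := l (oa_inv h))); rewrite -{2}abs_lh.
  by apply: hdagger => //; apply: H_inv.
Qed.

Lemma Hsharp_sub b : Hsharp b -> HsharpU b.
Proof.
move=> [h Hh ->]; exists h, szero; split=> //; first exact: series0.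
by apply: functional_extensionality => x; rewrite /sadd /szero addr0.
Qed.

Lemma HsharpU_product b :
  HsharpU b <-> exists a, exists c, [/\ Hsharp a, ExpPart c & b = sadd a c].
Proof.
split=> [[h [a [Hh Ea ->]]]|[_ [c [[h Hh ->] Ec ->]]]]; last by exists h, c.
by exists (l h), a; split=> //; exists h.
Qed.

(* H is convex in H^{#,U}: by sign domination, l h1 <= l h + f <= l h2
   forces f = 0 or l h + f = l h1 or l h + f = l h2 *)
Lemma HsharpU_convex : convex_in ltS Hsharp HsharpU.
Proof.
move=> _ _ _ [h1 Hh1 ->] [h2 Hh2 ->] [h [f [Hh Ef ->]]] le1 le2.
have [f0|fnz] := classic (f = szero).
  exists h => //; apply: functional_extensionality => x.
  by rewrite /sadd f0 /szero addr0.
have Hdiv h' : H h' -> H (oa_mul h (oa_inv h')) by move=> Hh'; apply: (proj2 hH).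
have [fpos|fneg] := classic (spos ltG f).
- case: le2 => [lt2|->]; last by exists h2.
  have := proj1 (dagger_sign (Hdiv _ Hh2) Ef fnz) fpos.
  by case/(spos_opp ltG_total _ lt2) => x; rewrite /sadd l_mul_inv //; ring.
- case: le1 => [lt1|<-]; last by exists h1.
  have := proj2 (dagger_sign (Hdiv _ Hh1) Ef fnz) fneg.
  by case/(spos_opp ltG_total _ lt1) => x; rewrite /sopp /sadd l_mul_inv //; ring.
Qed.

Section AboveU.
Variable u : G.
Hypothesis hu : above ltG H U u.

Let Hu : H u. Proof. by case: hu. Qed.

(* support bound: supp (l h) < u for h in H; otherwise the monomial (c/2).u,
   c the (positive) leading coefficient of l h or l h^-1, would not dominate *)
Lemma l_supp_below h g : H h -> l h g != 0 -> ltG g u.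
Proof.
move=> Hh lhg; apply: NNPP => not_gu.
have [|m [lhm mmax]] := leading_exists (proj1 (proj1 hl h)).
  by move=> lh0; rewrite lh0 /szero eqxx in lhg.
have um : le_of ltG u m.
  apply: (le_trans_of ltG_trans (nlt_le ltG_total not_gu)).
  by apply: nlt_le => // /mmax lhg0; rewrite lhg0 eqxx in lhg.
have [h' [Hh' c_pos h'max]] :
    exists h', [/\ H h', 0 < l h' m & forall x, ltG m x -> l h' x = 0].
  case: (ltgtP (l h m) 0) => [lhm_neg|lhm_pos|lhm0]; last by rewrite lhm0 eqxx in lhm.
  - exists (oa_inv h); rewrite l_inv // oppr_gt0; split=> // [|x /mmax lhx].
      exact: H_inv.
    by rewrite l_inv // lhx oppr0.
  - by exists h.
have half_pos : 0 < l h' m / 2 by rewrite divr_gt0.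
have Emono : ExpPart (monomial (l h' m / 2) u) by apply: monomial_series.
have := hdagger Hh' Emono (monomial_neq0 (u := u) (lt0r_neq0 half_pos)).
rewrite sabs_pos; last exact: monomial_spos.
move=> /(slt_asym ltG_total); apply; exists m; split.
  have [<-|mu] := classic (m = u); first by rewrite monomial_at; lra.
  by rewrite monomial_off // subr0.
move=> x mx; rewrite h'max // monomial_off ?subr0 // => xu.
by apply: (ltG_irr (x := u)); apply: (le_lt_trans_of ltG_trans um); rewrite -xu.
Qed.

(* H is a proper subgroup of H^{#,U}: the monomial e(1.u) is not in H *)
Lemma HsharpU_proper : exists2 b, HsharpU b & ~ Hsharp b.
Proof.
have Emono : ExpPart (monomial 1 u) by apply: monomial_series.
exists (monomial 1 u).
  exists (oa_one G), (monomial 1 u); split=> //; first exact: (proj1 hH).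
  by apply: functional_extensionality => x; rewrite /sadd l_one // add0r.
move=> [h Hh mono_lh].
have := hdagger Hh Emono (monomial_neq0 (u := u) (oner_neq0 k)).
by rewrite sabs_pos -?mono_lh; [apply: slt_irr | apply: monomial_spos].
Qed.

(* every monomial e(l g) in the support of Log(h') lies in H, hence below
   every element of (H^{#,U})^{>H} *)
Lemma LogSharp_supp_below h' b x : HsharpU h' -> above ltS HsharpU Hsharp b ->
  LogSharp l h' x != 0 -> ltS x b.
Proof.
move=> [h [a [Hh [_ a_supp] ->]]] [_ b_above].
have lH_below g : H g -> ltS (l g) b by move=> Hg; apply: b_above; exists g.
rewrite /LogSharp /embed; case: excluded_middle_informative => [ex|]; last by rewrite eqxx.
case: (constructive_indefinite_description _ ex) => g eg /= lha_g; rewrite -eg.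
have [ag0|ag] := eqVneq (a g) 0; last exact/lH_below/(proj1 (a_supp g ag)).
have lhg : l h g != 0 by move: lha_g; rewrite /sadd ag0 addr0.
apply: (slt_trans ltG_trans ltG_total _ (lH_below _ Hu)).
exact: (proj2 (proj2 hl)) (l_supp_below Hh lhg).
Qed.

Lemma LogSharp_lt_abs h' : HsharpU h' -> forall f : Gsharp_car k G -> k,
  series_on ltS (above ltS HsharpU Hsharp) f -> f <> szero ->
  slt ltS (LogSharp l h') (sabs ltS f).
Proof.
move=> Hh' f [fs f_supp] fnz.
have [b [fb abs_pos abs_max]] := sabs_leading fs fnz.
apply: (spos_dominated abs_pos abs_max) => x bx.
have [//|Lx] := eqVneq (LogSharp l h' x) 0.
have xb := LogSharp_supp_below Hh' (f_supp b fb) Lx.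
case: bx => [bx|eb]; first by case: (slt_asym ltG_total xb bx).
by rewrite -eb in xb; case: (slt_irr xb).
Qed.
End AboveU.
End ExponentialStep.

Unset Implicit Arguments.
Theorem lemma8
  (k : realFieldType)
  (log : k -> k)
  (hlogM : forall x y : k, 0 < x -> 0 < y -> log (x * y) = log x + log y)
  (hlog_mono : forall x y : k, 0 < x -> x < y -> log x < log y)
  (hlog_surj : forall y, exists2 x : k, 0 < x & log x = y)
  (G : oagroup) (l : G -> (G -> k)) (hl : prelog_section l)
  (U H : G -> Prop)
  (hU : is_subgroup U) (hH : is_subgroup H)
  (hUH : forall u, U u -> H u)
  (hUproper : exists2 h, H h & ~ U h)
  (hUconvex : convex_in (@oa_lt G) U H)
  (hdagger : forall h, H h -> forall f : G -> k,
      series_on (@oa_lt G) (above (@oa_lt G) H U) f -> f <> szero ->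
      slt (@oa_lt G) (l h) (sabs (@oa_lt G) f)) :
  let ltS := @Gsharp_lt k G in
  let Hs : @Gsharp_car k G -> Prop := fun b => exists2 h, H h & b = l h in
  let E : @Gsharp_car k G -> Prop :=
      fun b => series_on (@oa_lt G) (above (@oa_lt G) H U) b in
  let HsU : @Gsharp_car k G -> Prop :=
      fun b => exists h, exists a, [/\ H h, E a & b = sadd (l h) a] in
  ((forall b, Hs b -> HsU b) /\ (exists2 b, HsU b & ~ Hs b) /\
   convex_in ltS Hs HsU) /\
  ((forall b, HsU b <-> exists a, exists c, [/\ Hs a, E c & b = sadd a c]) /\
   (forall b, Hs b -> E b -> b = szero) /\
   convex_in ltS Hs HsU) /\
  (forall h', HsU h' -> forall f : @Gsharp_car k G -> k,
     series_on ltS (above ltS HsU Hs) f -> f <> szero ->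
     slt ltS (LogSharp l h') (sabs ltS f)).
Proof.
move=> ltS Hs E HsU.
have [u hu] := above_exists hU hH hUproper hUconvex.
have convex : convex_in ltS Hs HsU := @HsharpU_convex _ _ _ hl _ _ hH hdagger.
split; [split; [|split=> //] | split; [split; [|split=> //] |]].
- exact: @Hsharp_sub _ _ _ U H.
- exact: @HsharpU_proper _ _ _ hl _ _ hH hdagger _ hu.
- exact: HsharpU_product.
- exact: @Hsharp_ExpPart_trivial _ _ _ hl _ _ hH hdagger.
- exact: @LogSharp_lt_abs _ _ _ hl _ _ hH hdagger _ hu.
Qed.
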